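(* Fix integers $N\ge 2$ and $K\ge 1$. There exists a Boolean tensor $\mathcal{B}\in\{0,1\}^{N\times N\times K}$ such that no ranking tensor in $\pi(\mathcal{M}^{\text{DISTMULT}})$ is consistent with $\mathcal{B}$.
   Context: A score-based model assigns a score $s_k(i,j)\in\mathbb{R}$ to each triple, $i,j\in\{1,\dots,N\}$, $k\in\{1,\dots,K\}$; its scoring tensor has frontal slices $\mathbf{S}_k$ with $[\mathbf{S}_k]_{ij}=s_k(i,j)$. For a real $N\times N$ matrix $\mathbf{S}$, $\pi(\mathbf{S})$ is the matrix of dense ranks: $\pi_{ij}(\mathbf{S})=1+$ (number of distinct values among entries of $\mathbf{S}$ strictly larger than $s_{ij}$). For tensors, $\pi$ acts slicewise; for a set $X$, $\pi(X)=\{\pi(x):x\in X\}$. DISTMULT of size $r$: parameters $\mathbf{A}\in\mathbb{R}^{N\times r}$ (rows $\mathbf{a}_i$), $\mathbf{R}\in\mathbb{R}^{K\times r}$ (rows $\mathbf{r}_k$), score $\mathbf{a}_i^T\mathrm{diag}(\mathbf{r}_k)\mathbf{a}_j$; $\mathcal{M}^{\text{DISTMULT}}$ is the set of scoring tensors of all DISTMULT models of all sizes $r\in\mathbb{N}^+$. A ranking tensor $\mathcal{P}$ is consistent with a Boolean tensor $\mathcal{B}$ if for every $k$ and all $i,j,i',j'$: $b_{ijk}=1$ and $b_{i'j'k}=0$ imply $p_{ijk}<p_{i'j'k}$. *)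

From mathcomp Require Import all_boot all_order all_algebra.
From mathcomp Require Import reals.
Set Implicit Arguments. Unset Strict Implicit. Unset Printing Implicit Defensive.
Import Order.TTheory GRing.Theory Num.Theory.
Local Open Scope ring_scope.

(* A real N x N x K tensor, indexed slice-first: T k i j = [T_k]_{ij}. *)
Definition tensor (R : Type) (N K : nat) := 'I_K -> 'I_N -> 'I_N -> R.

Definition dense_rank (R : realType) (N : nat) (S : 'I_N -> 'I_N -> R)
    (i j : 'I_N) : nat :=
  (size (undup [seq S p.1 p.2 |
     p <- [seq (a, b) | a <- enum 'I_N, b <- enum 'I_N] & S i j < S p.1 p.2])).+1.

Definition pi_tensor (R : realType) (N K : nat) (S : tensor R N K)
  : tensor nat N K := fun k i j => dense_rank (S k) i j.

Definition distmult_score (R : realType) (N K r : nat)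
    (A : 'M[R]_(N, r)) (Rm : 'M[R]_(K, r)) : tensor R N K :=
  fun k i j => (row i A *m diag_mx (row k Rm) *m (row j A)^T) 0 0.

Definition in_M_distmult (R : realType) (N K : nat) (S : tensor R N K) : Prop :=
  exists (r : nat) (A : 'M[R]_(N, r)) (Rm : 'M[R]_(K, r)),
    (0 < r)%N /\ S = distmult_score A Rm.

Definition in_pi_M_distmult (R : realType) (N K : nat) (P : tensor nat N K) : Prop :=
  exists S : tensor R N K, in_M_distmult S /\ P = pi_tensor S.

Definition consistent (N K : nat) (P : tensor nat N K) (B : tensor bool N K) : Prop :=
  forall (k : 'I_K) (i j i' j' : 'I_N),
    B k i j = true -> B k i' j' = false -> (P k i j < P k i' j')%N.

(* A DISTMULT score a_i^T diag(r_k) a_j is a symmetric bilinear form in (a_i, a_j),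
   and the dense rank of an entry depends only on its value, so every ranking tensor
   of pi(M^DISTMULT) is symmetric in each slice.  A symmetric ranking cannot put
   (i, j) strictly before (j, i), hence no such ranking is consistent with a Boolean
   tensor that is true at (i, j) and false at (j, i) for some i <> j. *)
From mathcomp Require Import all_boot all_order all_algebra.
From mathcomp Require Import reals.
Import GRing.Theory.
Local Open Scope ring_scope.

Lemma distmult_score_sym (R : realType) (N K r : nat)
    (A : 'M[R]_(N, r)) (Rm : 'M[R]_(K, r)) k i j :
  distmult_score A Rm k i j = distmult_score A Rm k j i.
Proof.
rewrite /distmult_score.
have -> : row j A *m diag_mx (row k Rm) *m (row i A)^T
        = (row i A *m diag_mx (row k Rm) *m (row j A)^T)^T.
  by rewrite !trmx_mul trmxK tr_diag_mx mulmxA.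
by rewrite [RHS]mxE.
Qed.

Lemma eq_dense_rank (R : realType) (N : nat) (S : 'I_N -> 'I_N -> R) i j i' j' :
  S i j = S i' j' -> dense_rank S i j = dense_rank S i' j'.
Proof. by rewrite /dense_rank => ->. Qed.

Lemma in_pi_M_distmult_sym (R : realType) (N K : nat) (P : tensor nat N K) :
  in_pi_M_distmult R P -> forall k i j, P k i j = P k j i.
Proof.
move=> [_ [[r [A [Rm [_ ->]]]] ->]] k i j.
exact/eq_dense_rank/distmult_score_sym.
Qed.

Definition single_entry_tensor (N K : nat) (i j : 'I_N) : tensor bool N K :=
  fun _ a b => (a == i) && (b == j).

Lemma sym_not_consistent_single_entry (N K : nat) (P : tensor nat N K)
    (k : 'I_K) (i j : 'I_N) :
  i != j -> (forall a b, P k a b = P k b a) ->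
  ~ consistent P (single_entry_tensor N K i j).
Proof.
move=> neq_ij symP consP.
have := consP k i j j i; rewrite /single_entry_tensor !eqxx eq_sym (negbTE neq_ij).
by rewrite symP ltnn => /(_ erefl erefl).
Qed.

Theorem theorem9 (R : realType) (N K : nat) (hN : (2 <= N)%N) (hK : (1 <= K)%N) :
  exists B : tensor bool N K,
    ~ exists P : tensor nat N K, in_pi_M_distmult R P /\ consistent P B.
Proof.
pose i0 : 'I_N := Ordinal (ltnW hN).
pose i1 : 'I_N := Ordinal hN.
pose k0 : 'I_K := Ordinal hK.
exists (single_entry_tensor N K i0 i1) => -[P [piP consP]].
apply: (@sym_not_consistent_single_entry N K P k0 i0 i1 _ _ consP) => //.
exact: in_pi_M_distmult_sym piP k0.
Qed.
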